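(* Let $\lambda$ be a partition, $\nu\in\mathcal{U}(\lambda)$, and $(x,y)=\nu/\lambda$. Let $u,v\ge0$ be integers, $c=(x+u,y+v)$, $c_1=(x+u,y)$ and $c_2=(x,y+v)$. Then \[ P^{q,t}_\lambda(\nu\mid c)=P^{q,t}_\lambda(\nu\mid c_1)\,P^{q,t}_\lambda(\nu\mid c_2). \]
   Context: Partitions are Young diagrams in French convention: cells $(x,y)\in\mathbb{Z}_{>0}^2$ with $x\le\lambda_y$; $\lambda'$ is the conjugate, with $\lambda_j=0$ for $j>\lambda'_1$ and $\lambda'_i=0$ for $i>\lambda_1$. $\mathcal{U}(\lambda)$ is the set of partitions obtained by adding one cell to $\lambda$. $\overline{\lambda}=\mathbb{Z}_{>0}^2\setminus\lambda$. For $c=(x,y)\in\overline{\lambda}$: ${\rm arm}_\lambda(c)=\{(i,y):\lambda_y<i<x\}$, ${\rm leg}_\lambda(c)=\{(x,j):\lambda'_x<j<y\}$, $a(c)=|{\rm arm}_\lambda(c)|$, $\ell(c)=|{\rm leg}_\lambda(c)|$; $c$ is an outer corner of $\lambda$ iff $a(c)=\ell(c)=0$. For $c'\in{\rm arm}_\lambda(c)\cup{\rm leg}_\lambda(c)$, $P(c\rightarrow c')=q^{a(c)-i}\frac{t^{\ell(c)}(1-q)}{1-q^{a(c)}t^{\ell(c)}}$ if $c'=(x-i,y)$, and $P(c\rightarrow c')=t^{j-1}\frac{1-t}{1-q^{a(c)}t^{\ell(c)}}$ if $c'=(x,y-j)$. The exterior $(q,t)$-hook walk from $c$ terminates if $c$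 is an outer corner, otherwise moves to $c'$ with probability $P(c\rightarrow c')$ and repeats; $P^{q,t}_\lambda(\nu\mid c)$ is the probability (a rational function in $q,t$) that it terminates at the cell $\nu/\lambda$. *)

From HB Require Import structures.
From mathcomp Require Import all_boot all_order all_algebra.
Set Implicit Arguments. Unset Strict Implicit. Unset Printing Implicit Defensive.
Import Order.TTheory GRing.Theory Num.Theory.

Definition is_partition (l : seq nat) : bool :=
  sorted geq l && all (fun p => 0 < p) l.

(* lambda_y for y >= 1 (French convention, rows indexed from 1); 0 beyond. *)
Definition part (l : seq nat) (y : nat) : nat := nth 0 l y.-1.
Definition conj_part (l : seq nat) (x : nat) : nat := count (fun p => x <= p) l.

Definition in_diag (l : seq nat) (c : nat * nat) : bool :=
  [&& 0 < c.1, 0 < c.2 & c.1 <= part l c.2].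

Definition adds_one_cell (lam nu : seq nat) : bool :=
  [&& is_partition nu,
      all (fun i => nth 0 lam i <= nth 0 nu i) (iota 0 (size lam))
    & sumn nu == (sumn lam).+1].

Definition K : fieldType := {fraction {poly {poly rat}}}.
Definition qv : K := tofrac ('X%:P).
Definition tv : K := tofrac 'X.

Local Open Scope ring_scope.

(* a(c) and l(c) for c = (x,y) outside lambda *)
Definition arm_len (l : seq nat) (c : nat * nat) : nat := (c.1 - part l c.2).-1.
Definition leg_len (l : seq nat) (c : nat * nat) : nat := (c.2 - conj_part l c.1).-1.

(* Probability that the exterior (q,t)-hook walk from c terminates at cell d,
   computed with fuel (each step strictly decreases x + y). *)
Fixpoint hook_walk (l : seq nat) (d : nat * nat) (fuel : nat) (c : nat * nat) : K :=
  match fuel with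
  | 0%N => 0
  | f.+1 =>
    let a := arm_len l c in
    let b := leg_len l c in
    if (a == 0%N) && (b == 0%N) then (if c == d then 1 else 0)
    else
      let den := 1 - qv ^+ a * tv ^+ b in
      \sum_(1 <= i < a.+1)
         (qv ^+ (a - i) * (tv ^+ b * (1 - qv)) / den) * hook_walk l d f (c.1 - i, c.2)%N
    + \sum_(1 <= j < b.+1)
         (tv ^+ j.-1 * (1 - tv) / den) * hook_walk l d f (c.1, c.2 - j)%N
  end.

(* P^{q,t}_lambda(nu | c), where d = nu/lambda. *)
Definition hookP (l : seq nat) (d : nat * nat) (c : nat * nat) : K :=
  hook_walk l d (c.1 + c.2) c.

(* Put f(A, B) = P(nu | (x + A, y + B)).  Since (x, y) is an outer corner of lambda, the arm of
   (x + A, y + B) is A plus the arm a(B) of (x, y + B) and its leg is B plus the leg b(A) of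
   (x + A, y), while a walk that steps left of column x or below row y never reaches (x, y).
   So f obeys a recurrence whose step weights q^(A + a(B) - i) t^(B + b(A)) factor into a part
   depending on B and a part depending on A, and induction on A + B shows that f(A, 0) f(0, B)
   satisfies the same recurrence with the same value 1 at (0, 0). *)
From mathcomp Require Import all_boot all_order all_algebra.
From mathcomp Require Import zify ring.

Set Implicit Arguments.
Unset Strict Implicit.
Unset Printing Implicit Defensive.

Lemma sumn_ord_pad (s : seq nat) N : size s <= N -> sumn s = \sum_(k < N) nth 0 s k.
Proof.
elim: s N => [|a s IH] N le_sN; first by rewrite big1 // => k _; rewrite nth_nil.
by case: N le_sN => [|N] //= le_sN; rewrite big_ord_recl /= (IH N).
Qed.

Section AddedCellRows.
Variables (l n : seq nat).
Hypothesis le_ln : forall i, nth 0 l i <= nth 0 n i.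
Hypothesis sumn_n : sumn n = (sumn l).+1.

Lemma excess_two_rows k r : k != r ->
  (nth 0 n k - nth 0 l k) + (nth 0 n r - nth 0 l r) <= 1.
Proof.
move=> neq_kr; set N := (maxn k r).+1 + size l + size n.
have lt_kN : k < N by rewrite /N; lia.
have lt_rN : r < N by rewrite /N; lia.
have excess1 : \sum_(i < N) (nth 0 n i - nth 0 l i) = 1.
  have split_n : sumn n = sumn l + \sum_(i < N) (nth 0 n i - nth 0 l i).
    have [size_l size_n] : size l <= N /\ size n <= N by rewrite /N; lia.
    rewrite !(@sumn_ord_pad _ N) // -big_split /=.
    by apply: eq_bigr => i _; rewrite subnKC.
  by move: split_n; rewrite sumn_n; lia.
rewrite -excess1 (bigD1 (Ordinal lt_rN)) // (bigD1 (Ordinal lt_kN)) //= addnA.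
by rewrite [X in X <= _]addnC leq_addr.
Qed.

Variable r : nat.
Hypothesis lt_r : nth 0 l r < nth 0 n r.

Lemma nth_added_row : nth 0 n r = (nth 0 l r).+1.
Proof. have := @excess_two_rows r.+1 r; lia. Qed.

Lemma nth_other_rows k : k != r -> nth 0 l k = nth 0 n k.
Proof. move=> neq_kr; have := excess_two_rows neq_kr; have := le_ln k; lia. Qed.

End AddedCellRows.

Lemma nth_sorted_geq (s : seq nat) i j : sorted geq s -> i <= j -> nth 0 s j <= nth 0 s i.
Proof.
move=> sorted_s le_ij; have [lt_js|] := ltnP j (size s); last by move/(nth_default 0)->.
have lt_is : i < size s by apply: leq_ltn_trans lt_js.
have geq_trans : transitive geq by move=> a b c /= ab bc; apply: leq_trans bc ab.
exact: (sorted_leq_nth geq_trans leqnn 0 sorted_s).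
Qed.

Lemma conj_part_antitone l X1 X2 : X1 <= X2 -> conj_part l X2 <= conj_part l X1.
Proof. by move=> le_X; apply: sub_count => p /=; apply: leq_trans. Qed.

Lemma count_nth_prefix T (p : pred T) x0 (s : seq T) r : ~~ p x0 ->
  (forall k, k < r -> p (nth x0 s k)) ->
  (forall k, r <= k -> ~~ p (nth x0 s k)) ->
  count p s = r.
Proof.
move=> p_x0; elim: s r => [|a s IH] [|r] /= p_pre p_suf.
- by [].
- by have := p_pre 0 erefl; rewrite (negbTE p_x0).
- by rewrite (negbTE (p_suf 0 erefl)) (IH 0) // => k _; apply: (p_suf k.+1).
- by rewrite (p_pre 0 erefl) (IH r) // => k; [apply: (p_pre k.+1) | apply: (p_suf k.+1)].
Qed.

Lemma added_cell_position lam nu x y :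
  is_partition lam -> adds_one_cell lam nu ->
  in_diag nu (x, y) -> ~~ in_diag lam (x, y) ->
  [/\ 0 < x, 0 < y, part lam y = x.-1 & conj_part lam x = y.-1].
Proof.
case/andP=> sorted_lam _ /and3P[/andP[sorted_nu _] /allP le_lam_nu /eqP sumn_nu].
case/and3P=> /= x_gt0 y_gt0 x_le_nu; rewrite /in_diag /= x_gt0 y_gt0 /= -ltnNge.
rewrite /part in x_le_nu * => lam_lt_x.
have le_ln i : nth 0 lam i <= nth 0 nu i.
  have [lt_i|] := ltnP i (size lam); first by apply: le_lam_nu; rewrite mem_iota.
  by move/(nth_default 0)->.
have lt_row : nth 0 lam y.-1 < nth 0 nu y.-1 by apply: leq_trans x_le_nu.
have row_y := nth_added_row le_ln sumn_nu lt_row.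
have part_y : nth 0 lam y.-1 = x.-1 by lia.
split=> //; apply: (count_nth_prefix (x0 := 0)); first by rewrite -ltnNge.
- move=> k lt_k; rewrite (nth_other_rows le_ln sumn_nu lt_row); last by lia.
  by apply: leq_trans x_le_nu (nth_sorted_geq sorted_nu (ltnW lt_k)).
- move=> k le_k; rewrite -ltnNge.
  by apply: leq_ltn_trans (nth_sorted_geq sorted_lam le_k) _; lia.
Qed.

Lemma added_cell_outer_corner lam nu x y :
  is_partition lam -> adds_one_cell lam nu ->
  in_diag nu (x, y) -> ~~ in_diag lam (x, y) ->
  [/\ arm_len lam (x, y) = 0, leg_len lam (x, y) = 0,
      forall B, part lam (y + B) < x & forall A, conj_part lam (x + A) < y].
Proof.
move=> lam_part add_nu nu_xy lam_xy.
have [x_gt0 y_gt0 part_y conj_x] := added_cell_position lam_part add_nu nu_xy lam_xy.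
rewrite /arm_len /leg_len /= part_y conj_x; split; try lia.
- move=> B; apply: leq_ltn_trans (_ : part lam (y + B) <= part lam y) _; last lia.
  by apply: nth_sorted_geq; [case/andP: lam_part | lia].
- by move=> A; apply: leq_ltn_trans (conj_part_antitone lam (leq_addr A x)) _; lia.
Qed.

Lemma arm_len_addl l X Y A : part l Y < X -> arm_len l (X + A, Y) = A + arm_len l (X, Y).
Proof. by rewrite /arm_len /=; lia. Qed.

Lemma leg_len_addr l X Y B : conj_part l X < Y -> leg_len l (X, Y + B) = B + leg_len l (X, Y).
Proof. by rewrite /leg_len /=; lia. Qed.

Import GRing.Theory.
Local Open Scope ring_scope.

Lemma qt_den_neq0 (a b : nat) : (0 < a + b)%N -> 1 - qv ^+ a * tv ^+ b != 0.
Proof.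
move=> ab_gt0; rewrite subr_eq0 /qv /tv -!rmorphXn -rmorphM -(rmorph1 (@tofrac _)).
rewrite tofrac_eq.
case: b ab_gt0 => [|b] ab_gt0.
- rewrite expr0 mulr1 -polyC1 (inj_eq polyC_inj); apply/eqP.
  by move=> /(congr1 (fun p : {poly rat} => size p)); rewrite size_polyXn size_poly1; lia.
- apply/eqP => /(congr1 (fun p : {poly {poly rat}} => p`_0)).
  by rewrite coef1 coef0M coefXn /= mulr0 => /eqP; rewrite oner_eq0.
Qed.

Section HookWalk.
Variables (l : seq nat) (d : nat * nat).

Lemma hook_walk_outside f c : ((c.1 < d.1) || (c.2 < d.2))%N -> hook_walk l d f c = 0.
Proof.
elim: f c => [//|f IH] [X Y] /= out_c.
case: ifP => _; first by case: eqP => // eq_cd; move: out_c; rewrite -eq_cd /= !ltnn.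
by rewrite !big1_seq ?addr0 // => i _; rewrite IH ?mulr0 //=; lia.
Qed.

Lemma hook_walk_fuelS f c : (0 < c.1)%N -> (0 < c.2)%N -> (c.1 + c.2 <= f)%N ->
  hook_walk l d f.+1 c = hook_walk l d f c.
Proof.
elim: f c => [|f IH] [X Y] /= X_gt0 Y_gt0 le_f; first lia.
case: ifP => // _; congr (_ + _); apply: eq_big_nat => i /andP[i_gt0 i_le];
  rewrite /arm_len /leg_len /= in i_le; congr (_ * _); apply: IH => /=; lia.
Qed.

Lemma hook_walk_hookP f c : (0 < c.1)%N -> (0 < c.2)%N -> (c.1 + c.2 <= f)%N ->
  hook_walk l d f c = hookP l d c.
Proof.
move=> c1_gt0 c2_gt0 /subnK <-; elim: (f - _)%N => [//|k IH].
by rewrite addSn hook_walk_fuelS //; lia.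
Qed.

Lemma hookP_outside c : ((c.1 < d.1) || (c.2 < d.2))%N -> hookP l d c = 0.
Proof. exact: hook_walk_outside. Qed.

Lemma hookP_target : (0 < d.1 + d.2)%N ->
  arm_len l d = 0%N -> leg_len l d = 0%N -> hookP l d d = 1.
Proof.
move=> d_pos arm0 leg0; rewrite /hookP; case: (_ + _)%N d_pos => //= f _.
by rewrite arm0 leg0 !eqxx.
Qed.

Lemma hookP_step X Y : (0 < X)%N -> (0 < Y)%N ->
  let a := arm_len l (X, Y) in let b := leg_len l (X, Y) in
  ~~ ((a == 0) && (b == 0))%N ->
  hookP l d (X, Y) =
      \sum_(1 <= i < a.+1)
         (qv ^+ (a - i) * (tv ^+ b * (1 - qv)) / (1 - qv ^+ a * tv ^+ b))
           * hookP l d (X - i, Y)%N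
    + \sum_(1 <= j < b.+1)
         (tv ^+ j.-1 * (1 - tv) / (1 - qv ^+ a * tv ^+ b)) * hookP l d (X, Y - j)%N.
Proof.
move=> X_gt0 Y_gt0 a b not_corner.
have [f XY] : exists f, (X + Y = f.+1)%N by exists (X + Y).-1; lia.
rewrite {1}/hookP /= XY /= -/a -/b (negbTE not_corner).
congr (_ + _); apply: eq_big_nat => i /andP[i_gt0 i_le];
  rewrite /a /b /arm_len /leg_len /= in i_le; rewrite hook_walk_hookP //=; lia.
Qed.

End HookWalk.

Section ProductRecurrence.
Variables (R : idomainType) (q t : R) (al be : nat -> nat) (f : nat -> nat -> R).
Hypothesis al0 : al 0 = 0%N.
Hypothesis be0 : be 0 = 0%N.
Hypothesis f00 : f 0 0 = 1.
Hypothesis den_neq0 : forall a b, (0 < a + b)%N -> 1 - q ^+ a * t ^+ b != 0.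
Hypothesis f_rec : forall A B, (0 < A + B)%N ->
  f A B * (1 - q ^+ (A + al B) * t ^+ (B + be A)) =
    \sum_(1 <= i < A.+1) q ^+ (A + al B - i) * (t ^+ (B + be A) * (1 - q)) * f (A - i)%N B
  + \sum_(1 <= j < B.+1) t ^+ j.-1 * (1 - t) * f A (B - j)%N.

Lemma rec_row_sum A :
  \sum_(1 <= i < A.+1) q ^+ (A - i) * (t ^+ be A * (1 - q)) * f (A - i)%N 0
  = f A 0 * (1 - q ^+ A * t ^+ be A).
Proof.
case: A => [|A]; first by rewrite big_geq // be0 !expr0 mulr1 subrr mulr0.
have := @f_rec A.+1 0 erefl; rewrite al0 addn0 add0n => ->.
by rewrite [\sum_(1 <= j < 1) _]big_geq // addr0.
Qed.

Lemma rec_col_sum B :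
  \sum_(1 <= j < B.+1) t ^+ j.-1 * (1 - t) * f 0 (B - j)%N
  = f 0 B * (1 - q ^+ al B * t ^+ B).
Proof.
case: B => [|B]; first by rewrite big_geq // al0 !expr0 mulr1 subrr mulr0.
have := @f_rec 0 B.+1 erefl; rewrite be0 addn0 add0n => ->.
by rewrite [\sum_(1 <= i < 1) _]big_geq // add0r.
Qed.

(* Substituting [f A B = f A 0 * f 0 B] into the recurrence, the [i]-sum is a multiple of
   the row recurrence at [(A, 0)] and the [j]-sum one of the column recurrence at [(0, B)]. *)
Lemma rec_solution_split A B : f A B = f A 0 * f 0 B.
Proof.
have [n lt_AB] := ubnP (A + B); elim: n A B lt_AB => // n IH A B lt_AB.
have [AB0|AB_gt0] := posnP (A + B).
  have [-> ->] : A = 0%N /\ B = 0%N by lia.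
  by rewrite f00 mulr1.
have den_AB : 1 - q ^+ (A + al B) * t ^+ (B + be A) != 0 by apply: den_neq0; lia.
apply: (mulIf den_AB); rewrite f_rec //.
have -> : \sum_(1 <= i < A.+1) q ^+ (A + al B - i) * (t ^+ (B + be A) * (1 - q)) * f (A - i)%N B
   = q ^+ al B * t ^+ B * f 0 B *
     \sum_(1 <= i < A.+1) q ^+ (A - i) * (t ^+ be A * (1 - q)) * f (A - i)%N 0.
  rewrite mulr_sumr; apply: eq_big_nat => i /andP[i_gt0 i_le].
  rewrite IH; last lia.
  by rewrite (_ : A + al B - i = al B + (A - i))%N ?exprD; [ring | lia].
have -> : \sum_(1 <= j < B.+1) t ^+ j.-1 * (1 - t) * f A (B - j)%N
   = f A 0 * \sum_(1 <= j < B.+1) t ^+ j.-1 * (1 - t) * f 0 (B - j)%N.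
  by rewrite mulr_sumr; apply: eq_big_nat => j /andP[j_gt0 j_le]; rewrite IH; [ring | lia].
rewrite rec_row_sum rec_col_sum !exprD; ring.
Qed.

End ProductRecurrence.

Section ShiftedHookP.
Variables (lam : seq nat) (x y : nat).
Hypothesis row_lt : forall B, (part lam (y + B) < x)%N.
Hypothesis col_lt : forall A, (conj_part lam (x + A) < y)%N.

Local Notation f A B := (hookP lam (x, y) (x + A, y + B)%N).
Local Notation al B := (arm_len lam (x, y + B)%N).
Local Notation be A := (leg_len lam (x + A, y)%N).

Lemma hookP_shifted_rec A B : (0 < A + B)%N ->
  f A B * (1 - qv ^+ (A + al B) * tv ^+ (B + be A)) =
    \sum_(1 <= i < A.+1) qv ^+ (A + al B - i) * (tv ^+ (B + be A) * (1 - qv)) * f (A - i)%N B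
  + \sum_(1 <= j < B.+1) tv ^+ j.-1 * (1 - tv) * f A (B - j)%N.
Proof.
move=> AB_gt0.
have x_gt0 : (0 < x)%N := leq_ltn_trans (leq0n _) (row_lt 0).
have y_gt0 : (0 < y)%N := leq_ltn_trans (leq0n _) (col_lt 0).
have arm_AB := arm_len_addl A (row_lt B); have leg_AB := leg_len_addr B (col_lt A).
rewrite hookP_step /=; [|lia|lia|by rewrite arm_AB leg_AB; lia].
rewrite arm_AB leg_AB (@big_cat_nat _ _ _ A.+1 1 (A + al B).+1) //=; last lia.
rewrite (@big_cat_nat _ _ _ B.+1 1 (B + be A).+1) //=; last lia.
rewrite [X in _ + X + _]big1_seq ?addr0 => [|i]; last first.
  rewrite mem_index_iota => /andP[_ /andP[lt_Ai _]].
  by rewrite hookP_outside ?mulr0 //=; lia.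
rewrite [X in _ + (_ + X)]big1_seq ?addr0 => [|j]; last first.
  rewrite mem_index_iota => /andP[_ /andP[lt_Bj _]].
  by rewrite hookP_outside ?mulr0 //=; lia.
have den_AB : 1 - qv ^+ (A + al B) * tv ^+ (B + be A) != 0 by apply: qt_den_neq0; lia.
rewrite mulrDl !mulr_suml; congr (_ + _); apply: eq_big_nat => i /andP[i_gt0 i_le];
  rewrite mulrAC divfK //; congr (_ * hookP _ _ (_, _)); lia.
Qed.

End ShiftedHookP.

Theorem lemma6p6 (lam nu : seq nat) (x y u v : nat) :
  is_partition lam ->
  adds_one_cell lam nu ->
  in_diag nu (x, y) -> ~~ in_diag lam (x, y) ->
  hookP lam (x, y) (x + u, y + v)%N
  = hookP lam (x, y) (x + u, y)%N * hookP lam (x, y) (x, y + v)%N.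
Proof.
move=> lam_part add_nu nu_xy lam_xy.
have [arm0 leg0 row_lt col_lt] := added_cell_outer_corner lam_part add_nu nu_xy lam_xy.
have x_gt0 : (0 < x)%N := leq_ltn_trans (leq0n _) (row_lt 0).
have := rec_solution_split (q := qv) (t := tv) (al := fun B => arm_len lam (x, y + B)%N)
  (be := fun A => leg_len lam (x + A, y)%N) (f := fun A B => hookP lam (x, y) (x + A, y + B)%N).
rewrite !addn0 => -> //.
- by rewrite hookP_target //= addn_gt0 x_gt0.
- exact: qt_den_neq0.
- exact: hookP_shifted_rec.
Qed.
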